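(* Let $n$, $m$, and $k$ be any nonnegative integers. Then \[ \sum_{c\ge0} q^{c(c-1+k)} [2c+k]_q \genfrac{[}{]}{0pt}{}{2n+k}{n-c}_q\genfrac{[}{]}{0pt}{}{2m+k}{m-c}_q =\frac{[n+k]_q [m+k]_q}{[n+m+k]_q}\genfrac{[}{]}{0pt}{}{2n+k}{n+k}_q \genfrac{[}{]}{0pt}{}{2m+k}{m+k}_q. \]
   Context: Notation: $[n]_q=\frac{1-q^n}{1-q}$, $[n]_q!=[1]_q[2]_q\cdots[n]_q$, and $\genfrac{[}{]}{0pt}{}{n}{k}_q=\frac{[n]_q!}{[k]_q![n-k]_q!}$ denotes the $q$-binomial coefficient. *)

From HB Require Import structures.
From mathcomp Require Import all_boot all_order all_algebra.
From mathcomp Require Import fraction.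
Set Implicit Arguments. Unset Strict Implicit. Unset Printing Implicit Defensive.
Import Order.TTheory GRing.Theory Num.Theory.
Local Open Scope ring_scope.

Definition QF := {fraction {poly int}}.
Definition q : QF := FracField.tofrac ('X : {poly int}).

Definition qint (n : nat) : QF := (1 - q ^+ n) / (1 - q).
Definition qfact (n : nat) : QF := \prod_(1 <= i < n.+1) qint i.
Definition qbinom (n k : nat) : QF :=
  if (k <= n)%N then qfact n / (qfact k * qfact (n - k)) else 0.

From HB Require Import structures.
From mathcomp Require Import all_boot all_order all_algebra.
From mathcomp Require Import fraction.
From mathcomp Require Import ring zify.
Import Order.TTheory GRing.Theory Num.Theory.
Local Open Scope ring_scope.

(* The sum telescopes.  With
     W c = q^(c(c-1+k)) [n+c+k] [m+c+k] [2n+k choose n+c+k] [2m+k choose m+c+k],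
   the Pascal-type step [N-j] [N choose j] = [j+1] [N choose j+1] gives
     W (c+1) = q^(c(c-1+k)) q^(2c+k) [n-c] [m-c] [2n+k choose n-c] [2m+k choose m-c],
   and the q-identity [a+x][b+x] - q^x [a][b] = [x][a+b+x] (with a = n-c,
   b = m-c, x = 2c+k) turns W c - W (c+1) into the c-th summand times
   [n+m+k].  Summing from 0 to min n m leaves W 0, the right-hand side times
   [n+m+k], since W vanishes past min n m.  W is [qtelescoper] below. *)

Lemma oneBqX_neq0 (n : nat) : (0 < n)%N -> 1 - q ^+ n != 0.
Proof.
move=> n_gt0; rewrite /q -tofracXn -tofrac1 -tofracB tofrac_eq0.
apply/eqP => /(congr1 (fun p : {poly int} => p`_0)).
by rewrite coefB coef1 coefXn coef0 eq_sym; case: n n_gt0.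
Qed.

Lemma oneBq_neq0 : 1 - q != 0.
Proof. by rewrite -[q]expr1 oneBqX_neq0. Qed.

Lemma qint0 : qint 0 = 0.
Proof. by rewrite /qint expr0 subrr mul0r. Qed.

Lemma qint_neq0 (n : nat) : (0 < n)%N -> qint n != 0.
Proof. by move=> n_gt0; rewrite mulf_neq0 ?invr_eq0 ?oneBqX_neq0 ?oneBq_neq0. Qed.

(* [qint_addM] with A = q^a, B = q^b, X = q^x and d = 1 - q abstracted:
   [field] is fast on an abstract field but not on the concrete QF. *)
Lemma qint_addM_field (F : fieldType) (d A B X : F) : d != 0 ->
  (1 - A * X) / d * ((1 - B * X) / d) - X * ((1 - A) / d) * ((1 - B) / d)
  = (1 - X) / d * ((1 - A * B * X) / d).
Proof. by move=> d_neq0; field. Qed.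

Lemma qint_addM (a b x : nat) :
  qint (a + x) * qint (b + x) - q ^+ x * qint a * qint b
  = qint x * qint (a + b + x).
Proof. by rewrite /qint !exprD qint_addM_field ?oneBq_neq0. Qed.

Lemma qfactS (n : nat) : qfact n.+1 = qfact n * qint n.+1.
Proof. by rewrite /qfact big_nat_recr. Qed.

Lemma qfact_neq0 (n : nat) : qfact n != 0.
Proof.
elim: n => [|n IHn]; first by rewrite /qfact big_geq ?oner_neq0.
by rewrite qfactS mulf_neq0 ?qint_neq0.
Qed.

Lemma qbinom_gt (N j : nat) : (N < j)%N -> qbinom N j = 0.
Proof. by rewrite /qbinom ltnNge => /negbTE ->. Qed.

Lemma qbinom_sym (N j : nat) : (j <= N)%N -> qbinom N j = qbinom N (N - j).
Proof. by move=> jN; rewrite /qbinom jN leq_subr subKn // [qfact j * _]mulrC. Qed.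

Lemma mulf_div_cancel (F : fieldType) (x a b : F) : x != 0 -> x * (a / (b * x)) = a / b.
Proof. by move=> x_neq0; rewrite invfM mulrCA [x * _]mulrCA mulfV ?mulr1. Qed.

Lemma qbinomS (N j : nat) : qint (N - j) * qbinom N j = qint j.+1 * qbinom N j.+1.
Proof.
have [jN | ] := ltnP j N; last first.
  rewrite leq_eqVlt => /predU1P[-> | Nj]; first by rewrite subnn qint0 mul0r qbinom_gt ?mulr0.
  by rewrite !qbinom_gt ?mulr0 // ltnW.
rewrite /qbinom jN ltnW //.
have -> : (N - j = (N - j.+1).+1)%N by rewrite subnSK.
rewrite !qfactS [qfact j * (_ * _)]mulrA [qfact j * qint _ * _]mulrAC.
by rewrite !mulf_div_cancel ?qint_neq0.
Qed.

Section Telescoping.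

Variables n m k : nat.

Definition qsummand (c : nat) : QF :=
  q ^+ (c * (c - 1 + k)) * qint (2 * c + k)
    * qbinom (2 * n + k) (n - c) * qbinom (2 * m + k) (m - c).

Definition qtelescoper (c : nat) : QF :=
  q ^+ (c * (c - 1 + k)) * (qint (n + c + k) * qbinom (2 * n + k) (n + c + k))
    * (qint (m + c + k) * qbinom (2 * m + k) (m + c + k)).

Lemma qbinom_central_sym (a c : nat) :
  (c <= a)%N -> qbinom (2 * a + k) (a - c) = qbinom (2 * a + k) (a + c + k).
Proof. by move=> ca; rewrite qbinom_sym; [congr qbinom | ]; lia. Qed.

Lemma qint_qbinom_central_succ (a c : nat) :
  qint (a + c.+1 + k) * qbinom (2 * a + k) (a + c.+1 + k)
  = qint (a - c) * qbinom (2 * a + k) (a + c + k).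
Proof.
have -> : (a + c.+1 + k = (a + c + k).+1)%N by lia.
by rewrite -qbinomS; congr (qint _ * _); lia.
Qed.

Lemma qtelescoperS (c : nat) :
  qtelescoper c.+1 = q ^+ (c * (c - 1 + k)) * q ^+ (2 * c + k)
    * (qint (n - c) * qbinom (2 * n + k) (n + c + k))
    * (qint (m - c) * qbinom (2 * m + k) (m + c + k)).
Proof.
rewrite /qtelescoper -exprD !qint_qbinom_central_succ.
by congr (q ^+ _ * _ * _); case: c => [|c] /=; nia.
Qed.

Lemma qsummand_telescope (c : nat) : (c <= minn n m)%N ->
  qsummand c * qint (n + m + k) = qtelescoper c - qtelescoper c.+1.
Proof.
rewrite leq_min => /andP[cn cm].
rewrite qtelescoperS /qsummand !qbinom_central_sym // /qtelescoper.
have := qint_addM (n - c) (m - c) (2 * c + k).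
have -> : (n - c + (2 * c + k) = n + c + k)%N by lia.
have -> : (m - c + (2 * c + k) = m + c + k)%N by lia.
have -> : (n - c + (m - c) + (2 * c + k) = n + m + k)%N by lia.
move=> qid.
transitivity (q ^+ (c * (c - 1 + k)) * qbinom (2 * n + k) (n + c + k)
  * qbinom (2 * m + k) (m + c + k) * (qint (2 * c + k) * qint (n + m + k))).
  by ring.
by rewrite -qid; ring.
Qed.

Lemma qtelescoper_gt (c : nat) : (minn n m < c)%N -> qtelescoper c = 0.
Proof.
rewrite gtn_min /qtelescoper => /orP[nc | mc].
  by rewrite [qbinom (2 * n + k) _]qbinom_gt ?mulr0 ?mul0r //; lia.
by rewrite [qbinom (2 * m + k) _]qbinom_gt ?mulr0 //; lia.
Qed.

Lemma qsum_telescope :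
  (\sum_(0 <= c < (minn n m).+1) qsummand c) * qint (n + m + k) = qtelescoper 0.
Proof.
rewrite mulr_suml (telescope_sumr_eq (fun c => - qtelescoper c)) //.
  by rewrite qtelescoper_gt // oppr0 add0r opprK.
by move=> c /andP[_ c_le]; rewrite qsummand_telescope // opprK addrC.
Qed.

End Telescoping.

Theorem lemma3p5 (n m k : nat) :
  \sum_(0 <= c < (minn n m).+1)
     q ^+ (c * (c - 1 + k)) * qint (2 * c + k)
       * qbinom (2 * n + k) (n - c) * qbinom (2 * m + k) (m - c)
  = qint (n + k) * qint (m + k) / qint (n + m + k)
      * qbinom (2 * n + k) (n + k) * qbinom (2 * m + k) (m + k).
Proof.
have [nmk0 | nmk_gt0] := posnP (n + m + k).
  have [-> [-> ->]] : (n = 0 /\ m = 0 /\ k = 0)%N by lia.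
  by rewrite big_nat1 qint0 !mulr0 !mul0r.
have D_neq0 : qint (n + m + k) != 0 by rewrite qint_neq0.
apply: (mulIf D_neq0).
rewrite (qsum_telescope n m k) /qtelescoper mul0n expr0 mul1r !addn0.
by rewrite [RHS]mulrAC [_ * qint (n + m + k)]mulrAC divfK //; ring.
Qed.
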